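(* Let $X$ be a proper geodesic $\mathrm{CAT}(-1)$ metric space and $\epsilon>0$, and let $$c_0(\epsilon)=2\log\left(\frac{2(1+e^{\epsilon/2})\sinh\epsilon}{\epsilon}\right).$$ For all points $a,b,a',b'\in X$ such that $d(a,a')\le\epsilon$, $d(b,b')\le\epsilon$ and $d(a,b)\ge c_0(\epsilon)$, if $m$ is the midpoint of the geodesic segment $[a,b]$, then $d(m,[a',b'])\le\epsilon/2$. *)

From HB Require Import structures.
From mathcomp Require Import all_boot all_order all_algebra.
From mathcomp Require Import all_classical all_reals all_analysis.
Set Implicit Arguments. Unset Strict Implicit. Unset Printing Implicit Defensive.
Import Order.TTheory GRing.Theory Num.Theory.
Local Open Scope classical_set_scope.
Local Open Scope ring_scope.

Section Defs.
Variable R : realType.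

Definition sinhR (x : R) : R := (expR x - expR (- x)) / 2.
Definition acoshR (y : R) : R := ln (y + Num.sqrt (y ^+ 2 - 1)).

Definition is_geodesic {T : Type} (d : T -> T -> R) (x y : T) (g : R -> T) : Prop :=
  g 0 = x /\ g (d x y) = y /\
  forall s t, 0 <= s <= d x y -> 0 <= t <= d x y -> d (g s) (g t) = `|s - t|.

Definition geodesic_space (X : metricType R) : Prop :=
  forall x y : X, exists g : R -> X, is_geodesic (@mdist R X) x y g.

Definition proper_space (X : metricType R) : Prop :=
  forall (x : X) (r : R), compact (closed_ball x r).

(* The hyperbolic plane H^2 (curvature -1), hyperboloid model in R^3 *)
Definition hpoint : Type := (R * R * R)%type.
Definition in_H2 (p : hpoint) : Prop :=
  p.1.1 ^+ 2 - p.1.2 ^+ 2 - p.2 ^+ 2 = 1 /\ 0 < p.1.1.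
Definition hdist (p q : hpoint) : R :=
  acoshR (p.1.1 * q.1.1 - p.1.2 * q.1.2 - p.2 * q.2).
Definition H2_geodesic (p q : hpoint) (g : R -> hpoint) : Prop :=
  is_geodesic hdist p q g /\ forall s, 0 <= s <= hdist p q -> in_H2 (g s).

Definition CAT_m1 (X : metricType R) : Prop :=
  forall (p q r : X) (gpq gqr grp : R -> X) (P Q S : hpoint)
         (gPQ gQS gSP : R -> hpoint),
    is_geodesic (@mdist R X) p q gpq ->
    is_geodesic (@mdist R X) q r gqr ->
    is_geodesic (@mdist R X) r p grp ->
    in_H2 P -> in_H2 Q -> in_H2 S ->
    hdist P Q = mdist p q -> hdist Q S = mdist q r -> hdist S P = mdist r p ->
    H2_geodesic P Q gPQ -> H2_geodesic Q S gQS -> H2_geodesic S P gSP ->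
    let side (i : nat) : (R -> X) * (R -> hpoint) * R :=
      match i with
      | 0%N => (gpq, gPQ, mdist p q)
      | 1%N => (gqr, gQS, mdist q r)
      | _ => (grp, gSP, mdist r p)
      end in
    forall (i j : 'I_3) (s t : R),
      0 <= s <= (side i).2 -> 0 <= t <= (side j).2 ->
      mdist ((side i).1.1 s) ((side j).1.1 t)
        <= hdist ((side i).1.2 s) ((side j).1.2 t).

Definition dist_to_seg (X : metricType R) (m : X) (g : R -> X) (L : R) : R :=
  inf [set mdist m (g t) | t in [set t : R | 0 <= t <= L]].

Definition c0 (eps : R) : R :=
  2 * ln ((2 * (1 + expR (eps / 2)) * sinhR eps) / eps).

End Defs.

From HB Require Import structures.
From mathcomp Require Import all_boot all_order all_algebra.
From mathcomp Require Import all_classical all_reals all_analysis.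
From mathcomp Require Import ring lra.
Import Order.TTheory GRing.Theory Num.Theory.
Local Open Scope classical_set_scope.
Local Open Scope ring_scope.

Set Implicit Arguments.
Unset Strict Implicit.
Unset Printing Implicit Defensive.

(* Let L = d(a, b) and let h be a geodesic from b to a'. Compare the geodesic
   triangles with sides [b, a], [b, a'] and [a', b], [a', b'] to triangles of H^2:
   in each, the two sides issuing from the common vertex end eps-close, so by the
   hyperbolic law of cosines their points at distance L/2 from the far ends are
   within q + q^2 of each other, where q = e^{-L/2} sinh eps.  The constant c0(eps)
   is chosen so that q + q^2 <= eps/4 (and L > 2 eps), so the midpoint g(L/2) is
   within eps/4 of h(L/2), which is within eps/4 of a point of [a', b']. *)

Section HyperbolicFunctions.
Variable R : realType.
Implicit Types x y s t l : R.

Definition coshR x : R := (expR x + expR (- x)) / 2.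

Lemma sinhR0 : sinhR (0 : R) = 0.
Proof. by rewrite /sinhR oppr0 subrr mul0r. Qed.

Lemma coshR0 : coshR 0 = 1.
Proof. rewrite /coshR oppr0 expR0; lra. Qed.

Lemma sinhRN x : sinhR (- x) = - sinhR x.
Proof. rewrite /sinhR opprK; lra. Qed.

Lemma coshRN x : coshR (- x) = coshR x.
Proof. by rewrite /coshR opprK addrC. Qed.

Lemma sqr_coshR_sub_sqr_sinhR x : coshR x ^+ 2 - sinhR x ^+ 2 = 1.
Proof. by rewrite /coshR /sinhR expRN; field; rewrite gt_eqF ?expR_gt0. Qed.

Lemma coshRB x y : coshR (x - y) = coshR x * coshR y - sinhR x * sinhR y.
Proof.
rewrite /coshR /sinhR opprB !expRD !expRN.
by field; rewrite !gt_eqF ?expR_gt0.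
Qed.

Lemma coshRD x y : coshR (x + y) = coshR x * coshR y + sinhR x * sinhR y.
Proof. by rewrite -(opprK y) coshRB coshRN sinhRN opprK mulrN opprK. Qed.

Lemma sinhR_ge0 x : 0 <= x -> 0 <= sinhR x.
Proof. by move=> x0; rewrite /sinhR divr_ge0 // subr_ge0 ler_expR; lra. Qed.

Lemma sinhR_gt0 x : 0 < x -> 0 < sinhR x.
Proof. by move=> x0; rewrite /sinhR divr_gt0 // subr_gt0 ltr_expR; lra. Qed.

Lemma coshR_gt0 x : 0 < coshR x.
Proof. by rewrite divr_gt0 // addr_gt0 // expR_gt0. Qed.

Lemma coshR_norm x : coshR `|x| = coshR x.
Proof. by case: (ler0P x) => _; rewrite ?coshRN. Qed.

Lemma coshR_ge0_le x y : 0 <= x -> x <= y -> coshR x <= coshR y.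
Proof.
move=> x0 xy; rewrite /coshR !expRN ler_pM2r // -subr_ge0.
have X1 : 1 <= expR x by rewrite -expR0 ler_expR.
have XY : expR x <= expR y by rewrite ler_expR.
have -> : expR y + (expR y)^-1 - (expR x + (expR x)^-1) =
    (expR y - expR x) * (expR x * expR y - 1) / (expR x * expR y).
  by field; rewrite !gt_eqF ?expR_gt0.
by rewrite divr_ge0 ?mulr_ge0 ?expR_ge0 // subr_ge0; nra.
Qed.

Lemma ler_coshR_norm x y : `|x| <= `|y| -> coshR x <= coshR y.
Proof. by move=> xy; rewrite -coshR_norm -(coshR_norm y) coshR_ge0_le. Qed.

Lemma acoshR_coshR x : acoshR (coshR x) = `|x|.
Proof.
rewrite /acoshR.
have -> : coshR x ^+ 2 - 1 = sinhR x ^+ 2.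
  by have := sqr_coshR_sub_sqr_sinhR x; lra.
rewrite sqrtr_sqr; case: (ler0P x) => x0.
- rewrite ler0_norm; last by rewrite -oppr_ge0 -sinhRN sinhR_ge0 ?oppr_ge0.
  have -> : coshR x - sinhR x = expR (- x) by rewrite /coshR /sinhR; field.
  by rewrite expRK.
- rewrite ger0_norm ?sinhR_ge0 ?ltW //.
  have -> : coshR x + sinhR x = expR x by rewrite /coshR /sinhR; field.
  by rewrite expRK.
Qed.

Lemma sinhR_le_expRB s l : s <= l -> sinhR s <= expR (s - l) * sinhR l.
Proof.
move=> sl; rewrite /sinhR mulrA ler_pM2r // mulrBr -!expRD.
by rewrite lerB ?addrNK // ler_expR; lra.
Qed.

Lemma acoshR_le y d : 1 <= y -> y + Num.sqrt (y ^+ 2 - 1) <= expR d ->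
  acoshR y <= d.
Proof.
move=> y1 yd; rewrite /acoshR -(expRK d) ler_ln ?posrE ?expR_gt0 //.
by have := sqrtr_ge0 (y ^+ 2 - 1); lra.
Qed.

Lemma acoshR_1D_le x q : 0 <= q -> 0 <= x <= q ^+ 2 / 2 ->
  acoshR (1 + x) <= q + q ^+ 2.
Proof.
move=> q0 /andP[x0 xq]; apply: acoshR_le; first lra.
have sq : Num.sqrt ((1 + x) ^+ 2 - 1) <= q + q ^+ 2 - x.
  rewrite -(@ger0_norm _ (q + q ^+ 2 - x)); last by rewrite !expr2 in xq *; nra.
  rewrite -sqrtr_sqr ler_sqrt ?sqr_ge0 //.
  by rewrite !expr2 in xq *; nra.
by apply: le_trans (expR_ge1Dx _); lra.
Qed.

Lemma expR_mul_coshR_sub_le eps z :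
  expR z * (coshR eps - coshR z) <= sinhR eps ^+ 2 / 2.
Proof.
have -> : sinhR eps ^+ 2 / 2 =
    expR z * (coshR eps - coshR z) + (expR z - coshR eps) ^+ 2 / 2.
  have -> : sinhR eps ^+ 2 = coshR eps ^+ 2 - 1.
    by have := sqr_coshR_sub_sqr_sinhR eps; lra.
  by rewrite [coshR z]/coshR expRN; field; rewrite gt_eqF ?expR_gt0.
by rewrite lerDl divr_ge0 ?sqr_ge0.
Qed.

End HyperbolicFunctions.

Section Hyperboloid.
Variable R : realType.
Implicit Types (P Q : hpoint R) (k c s t l D : R).

Definition minkowski_dot P Q : R := P.1.1 * Q.1.1 - P.1.2 * Q.1.2 - P.2 * Q.2.

Lemma hdistE P Q : hdist P Q = acoshR (minkowski_dot P Q).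
Proof. by []. Qed.

Lemma in_H2E P : in_H2 P <-> minkowski_dot P P = 1 /\ 0 < P.1.1.
Proof. by rewrite /in_H2 /minkowski_dot !expr2. Qed.

(* Lagrange-type identity: (x1 x2)^2 - (1 + y1 y2 + z1 z2)^2 is a sum of three squares. *)
Lemma in_H2_minkowski_dot_eq1 P Q :
  in_H2 P -> in_H2 Q -> minkowski_dot P Q = 1 -> P = Q.
Proof.
case: P => [[x1 y1] z1]; case: Q => [[x2 y2] z2].
rewrite /in_H2 /minkowski_dot /= => -[h1 p1] [h2 p2] h.
have sum_sq : (y1 - y2) ^+ 2 + (z1 - z2) ^+ 2 + (y1 * z2 - z1 * y2) ^+ 2 = 0.
  have -> : (y1 - y2) ^+ 2 + (z1 - z2) ^+ 2 + (y1 * z2 - z1 * y2) ^+ 2 =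
    (1 + y1 ^+ 2 + z1 ^+ 2 - x1 ^+ 2) * (x2 ^+ 2)
    + (1 + y1 ^+ 2 + z1 ^+ 2) * (1 + y2 ^+ 2 + z2 ^+ 2 - x2 ^+ 2)
    + (x1 * x2 - y1 * y2 - z1 * z2 - 1) * (x1 * x2 + 1 + y1 * y2 + z1 * z2).
    by ring.
  have -> : 1 + y1 ^+ 2 + z1 ^+ 2 - x1 ^+ 2 = 0 by lra.
  have -> : 1 + y2 ^+ 2 + z2 ^+ 2 - x2 ^+ 2 = 0 by lra.
  by rewrite h; ring.
have := sqr_ge0 (y1 - y2); have := sqr_ge0 (z1 - z2).
have := sqr_ge0 (y1 * z2 - z1 * y2) => s3 s2 s1.
have /eqP : (y1 - y2) ^+ 2 = 0 by lra.
rewrite sqrf_eq0 subr_eq0 => /eqP ey.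
have /eqP : (z1 - z2) ^+ 2 = 0 by lra.
rewrite sqrf_eq0 subr_eq0 => /eqP ez.
subst y2 z2; have /eqP : x1 ^+ 2 = x2 ^+ 2 by lra.
by rewrite eqf_sqr => /orP[/eqP -> //|/eqP ex]; exfalso; lra.
Qed.

Lemma H2_geodesic_of_minkowski P Q D (f : R -> hpoint R) :
  hdist P Q = D -> f 0 = P -> f D = Q ->
  (forall s t, 0 <= s <= D -> 0 <= t <= D ->
     minkowski_dot (f s) (f t) = coshR (s - t)) ->
  (forall s, 0 <= s <= D -> 0 < (f s).1.1) ->
  H2_geodesic P Q f.
Proof.
move=> PQ f0 fD fdot fpos; rewrite /H2_geodesic /is_geodesic PQ.
split; first by split=> //; split=> // s t hs ht; rewrite hdistE fdot // acoshR_coshR.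
by move=> s hs; apply/in_H2E; rewrite fdot // subrr coshR0 fpos.
Qed.

(* The unit-speed geodesic ray from (1, 0, 0) in the direction (k, c). *)
Definition hray k c t : hpoint R := (coshR t, k * sinhR t, c * sinhR t).

Lemma hray0 k c : hray k c 0 = hray 1 0 0.
Proof. by rewrite /hray sinhR0 !mulr0. Qed.

Lemma minkowski_dot_hray k c k' c' s t :
  minkowski_dot (hray k c s) (hray k' c' t) =
  coshR s * coshR t - (k * k' + c * c') * sinhR s * sinhR t.
Proof. by rewrite /minkowski_dot /hray /=; ring. Qed.

Lemma minkowski_dot_hray_same k c s t : k ^+ 2 + c ^+ 2 = 1 ->
  minkowski_dot (hray k c s) (hray k c t) = coshR (s - t).
Proof. by move=> kc; rewrite minkowski_dot_hray coshRB -!expr2 kc mul1r mulrA. Qed.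

Lemma in_H2_hray k c t : k ^+ 2 + c ^+ 2 = 1 -> in_H2 (hray k c t).
Proof. by move=> kc; apply/in_H2E; rewrite minkowski_dot_hray_same // subrr coshR0 coshR_gt0. Qed.

Lemma hdist_hray k c s t : k ^+ 2 + c ^+ 2 = 1 ->
  hdist (hray k c s) (hray k c t) = `|s - t|.
Proof. by move=> kc; rewrite hdistE minkowski_dot_hray_same // acoshR_coshR. Qed.

Lemma hray_geodesic k c l : k ^+ 2 + c ^+ 2 = 1 -> 0 <= l ->
  H2_geodesic (hray k c 0) (hray k c l) (hray k c).
Proof.
move=> kc l0; apply: (H2_geodesic_of_minkowski (D := l)) => //.
- by rewrite hdist_hray // sub0r normrN ger0_norm.
- by move=> s t _ _; rewrite minkowski_dot_hray_same.
- by move=> s _; apply: coshR_gt0.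
Qed.

Lemma hray_geodesic_rev k c l : k ^+ 2 + c ^+ 2 = 1 -> 0 <= l ->
  H2_geodesic (hray k c l) (hray k c 0) (fun s => hray k c (l - s)).
Proof.
move=> kc l0; apply: (H2_geodesic_of_minkowski (D := l)); rewrite ?subr0 ?subrr //.
- by rewrite hdist_hray // subr0 ger0_norm.
- move=> s t _ _; rewrite minkowski_dot_hray_same // -[RHS]coshRN.
  by congr coshR; ring.
- by move=> s _; apply: coshR_gt0.
Qed.

Definition hcomb a P b Q : hpoint R :=
  (a * P.1.1 + b * Q.1.1, a * P.1.2 + b * Q.1.2, a * P.2 + b * Q.2).

Lemma minkowski_dot_hcomb a P b Q a' b' :
  minkowski_dot (hcomb a P b Q) (hcomb a' P b' Q) =
  a * a' * minkowski_dot P P + (a * b' + b * a') * minkowski_dot P Q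
  + b * b' * minkowski_dot Q Q.
Proof. by rewrite /minkowski_dot /hcomb /=; ring. Qed.

Lemma hcomb10 P Q : hcomb 1 P 0 Q = P.
Proof. by case: P => [[x y] z]; rewrite /hcomb /= !mul1r !mul0r !addr0. Qed.

Lemma hcomb01 P Q : hcomb 0 P 1 Q = Q.
Proof. by case: Q => [[x y] z]; rewrite /hcomb /= !mul1r !mul0r !add0r. Qed.

(* For D = hdist P Q, the geodesic from P to Q runs in the plane spanned by P and Q. *)
Definition hsegment P Q D s : hpoint R :=
  if D == 0 then P else hcomb (sinhR (D - s) / sinhR D) P (sinhR s / sinhR D) Q.

Lemma coshR_interpolation D s t : 0 < D ->
  let a u := sinhR (D - u) / sinhR D in let b u := sinhR u / sinhR D in
  a s * a t + (a s * b t + b s * a t) * coshR D + b s * b t = coshR (s - t).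
Proof.
move=> D0 a b; rewrite /a /b.
have e1 : 1 < expR D by rewrite -expR0 ltr_expR.
have eD : expR D * expR D - 1 != 0 by rewrite gt_eqF // subr_gt0; nra.
rewrite /sinhR /coshR !opprB !expRD !expRN.
by field; rewrite eD !gt_eqF ?expR_gt0.
Qed.

Lemma hsegment_geodesic P Q D : in_H2 P -> in_H2 Q -> 0 <= D ->
  minkowski_dot P Q = coshR D -> H2_geodesic P Q (hsegment P Q D).
Proof.
move=> hP hQ D_ge0 PQ.
have [[PP P0] [QQ Q0]] := (proj1 (in_H2E P) hP, proj1 (in_H2E Q) hQ).
have dPQ : hdist P Q = D by rewrite hdistE PQ acoshR_coshR ger0_norm.
have [DE|D0] := eqVneq D 0.
  have eqPQ : P = Q by apply: in_H2_minkowski_dot_eq1 => //; rewrite PQ DE coshR0.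
  rewrite /hsegment DE eqxx; subst D Q.
  apply: (H2_geodesic_of_minkowski (D := 0)) => // s t /andP[s0 s1] /andP[t0 t1].
  rewrite (_ : s = 0); last lra.
  by rewrite (_ : t = 0) ?PP ?subrr ?coshR0 //; lra.
have Dp : 0 < D by rewrite lt_neqAle eq_sym D0.
have shD : 0 < sinhR D by apply: sinhR_gt0.
apply: (H2_geodesic_of_minkowski (D := D)); rewrite // /hsegment (negbTE D0).
- by rewrite subr0 sinhR0 mul0r divff ?gt_eqF // hcomb10.
- by rewrite subrr sinhR0 mul0r divff ?gt_eqF // hcomb01.
- move=> s t _ _; rewrite minkowski_dot_hcomb PP QQ PQ !mulr1.
  exact: coshR_interpolation.
move=> s /andP[s0 sD]; rewrite /hcomb /=.
have b0 : 0 <= sinhR s / sinhR D by rewrite divr_ge0 ?(ltW shD) ?sinhR_ge0.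
have [sD'|eDs] := ltrP s D.
  have : 0 < sinhR (D - s) / sinhR D by rewrite divr_gt0 ?sinhR_gt0 ?subr_gt0.
  by have := mulr_ge0 b0 (ltW Q0); nra.
have -> : s = D by lra.
by rewrite subrr sinhR0 mul0r divff ?gt_eqF // mul0r mul1r add0r.
Qed.

End Hyperboloid.

Section HyperbolicTriangles.
Variable R : realType.
Implicit Types (k s t eps r : R).

(* The hyperbolic law of cosines: cosine of the angle opposite to l3 in a triangle
   of H^2 with sides l1, l2, l3, and the distance between the points at distances
   s and t from that vertex along the sides l1 and l2. *)
Definition hcos_angle l1 l2 l3 : R :=
  (coshR l1 * coshR l2 - coshR l3) / (sinhR l1 * sinhR l2).

Definition hvertex_dist k s t : R :=
  acoshR (coshR s * coshR t - k * sinhR s * sinhR t).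

Definition fellow_bound eps r : R :=
  let q := expR (- r) * sinhR eps in q + q ^+ 2.

Lemma hdist_hray_vertex k c s t :
  hdist (hray 1 0 s) (hray k c t) = hvertex_dist k s t.
Proof. by rewrite hdistE minkowski_dot_hray mul1r mul0r addr0. Qed.

Lemma hvertex_dist_diag k s :
  hvertex_dist k s s = acoshR (1 + (1 - k) * sinhR s ^+ 2).
Proof.
by rewrite /hvertex_dist; congr acoshR; have := sqr_coshR_sub_sqr_sinhR s; lra.
Qed.

Section Sides.
Variables l1 l2 l3 : R.
Hypotheses (l1_gt0 : 0 < l1) (l2_gt0 : 0 < l2).
Hypotheses (l3_ge : `|l1 - l2| <= l3) (l3_le : l3 <= l1 + l2).

Let l3_ge0 : 0 <= l3 := le_trans (normr_ge0 _) l3_ge.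

Let sinh_gt0 : 0 < sinhR l1 * sinhR l2.
Proof. by rewrite mulr_gt0 ?sinhR_gt0. Qed.

Lemma hcos_angleE :
  hcos_angle l1 l2 l3 * (sinhR l1 * sinhR l2) = coshR l1 * coshR l2 - coshR l3.
Proof. by rewrite divfK ?gt_eqF. Qed.

Lemma hcos_angle_defect :
  (1 - hcos_angle l1 l2 l3) * (sinhR l1 * sinhR l2) = coshR l3 - coshR (l1 - l2).
Proof. by rewrite mulrBl mul1r hcos_angleE coshRB; ring. Qed.

Lemma hcos_angle_le1 : hcos_angle l1 l2 l3 <= 1.
Proof.
rewrite -subr_ge0 -(pmulr_lge0 _ sinh_gt0) hcos_angle_defect subr_ge0.
by apply: ler_coshR_norm; rewrite (ger0_norm l3_ge0).
Qed.

Lemma hcos_angle_geN1 : -1 <= hcos_angle l1 l2 l3.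
Proof.
rewrite -subr_ge0 opprK -(pmulr_lge0 _ sinh_gt0) mulrDl mul1r hcos_angleE.
have : coshR l3 <= coshR (l1 + l2).
  by apply: ler_coshR_norm; rewrite !ger0_norm // addr_ge0 // ltW.
by rewrite coshRD; lra.
Qed.

(* Each sinh factor decays like expR (s - l_i), while
   expR (l1 - l2) * (coshR l3 - coshR (l1 - l2)) <= sinhR eps ^+ 2 / 2. *)
Lemma hcos_angle_defect_le eps s : l3 <= eps -> 0 <= s <= l1 -> s <= l2 ->
  (1 - hcos_angle l1 l2 l3) * sinhR s ^+ 2 <= (expR (s - l1) * sinhR eps) ^+ 2 / 2.
Proof.
move=> l3eps /andP[s0 sl1] sl2; have shs := sinhR_ge0 s0.
have sq : sinhR s ^+ 2 <= expR (s - l1) * expR (s - l2) * (sinhR l1 * sinhR l2).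
  rewrite expr2 [leRHS](_ : _ = expR (s - l1) * sinhR l1 * (expR (s - l2) * sinhR l2)).
    exact: (ler_pM shs shs (sinhR_le_expRB sl1) (sinhR_le_expRB sl2)).
  by ring.
have d0 : 0 <= coshR l3 - coshR (l1 - l2).
  by rewrite -hcos_angle_defect mulr_ge0 ?subr_ge0 ?hcos_angle_le1 // ltW.
rewrite -(ler_pM2r sinh_gt0) mulrAC hcos_angle_defect mulrC.
apply: (le_trans (ler_wpM2r d0 sq)).
have e2 : expR (s - l2) = expR (s - l1) * expR (l1 - l2).
  by rewrite -expRD; congr expR; ring.
rewrite e2 [leLHS](_ : _ = expR (s - l1) ^+ 2 * (sinhR l1 * sinhR l2) *
    (expR (l1 - l2) * (coshR l3 - coshR (l1 - l2)))); last by ring.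
rewrite [leRHS](_ : _ = expR (s - l1) ^+ 2 * (sinhR l1 * sinhR l2) *
    (sinhR eps ^+ 2 / 2)); last by ring.
apply: ler_wpM2l; first by rewrite mulr_ge0 ?sqr_ge0 // ltW.
apply: le_trans (expR_mul_coshR_sub_le eps (l1 - l2)).
apply: ler_wpM2l; first exact: expR_ge0.
rewrite lerD2r ler_coshR_norm // !ger0_norm //.
exact: le_trans l3eps.
Qed.

Lemma hvertex_dist_le_fellow_bound eps s : l3 <= eps ->
  0 <= s <= l1 -> s <= l2 ->
  hvertex_dist (hcos_angle l1 l2 l3) s s <= fellow_bound eps (l1 - s).
Proof.
move=> l3eps sl1 sl2; rewrite hvertex_dist_diag /fellow_bound opprB.
apply: acoshR_1D_le.
  by rewrite mulr_ge0 ?expR_ge0 // sinhR_ge0 // (le_trans l3_ge0).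
rewrite mulr_ge0 ?subr_ge0 ?sqr_ge0 ?hcos_angle_le1 //=.
exact: hcos_angle_defect_le.
Qed.

End Sides.
End HyperbolicTriangles.

Section CATm1.
Variables (R : realType) (X : metricType R).
Implicit Types (x y V A B : X) (s t : R).

Lemma is_geodesic_rev x y (g : R -> X) : is_geodesic (@mdist R X) x y g ->
  is_geodesic (@mdist R X) y x (fun s => g (mdist x y - s)).
Proof.
move=> [g0 [g1 gd]]; split; first by rewrite subr0.
split; first by rewrite metric_sym subrr.
move=> s t /andP[s0 s1] /andP[t0 t1]; rewrite metric_sym in s1 t1.
rewrite gd; first by rewrite distrC; congr `|_|; ring.
  by apply/andP; split; lra.
by apply/andP; split; lra.
Qed.

Lemma dist_to_seg_le x (g : R -> X) L t : 0 <= t <= L ->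
  dist_to_seg x g L <= mdist x (g t).
Proof.
move=> tL; apply: ge_inf; last by exists t.
by exists 0 => _ [u _ <-]; apply: mdist_ge0.
Qed.

Lemma mdist_ge_normB V A B : `|mdist V A - mdist V B| <= mdist A B.
Proof.
apply/ler_normlP; split.
  by have := metric_triangle V A B; lra.
by have := metric_triangle V B A; rewrite (metric_sym B A); lra.
Qed.

Lemma mdist_le_addV V A B : mdist A B <= mdist V A + mdist V B.
Proof. by have := metric_triangle A V B; rewrite (metric_sym A V). Qed.

Hypotheses (geodX : geodesic_space X) (catX : CAT_m1 X).

(* The comparison triangle of (A, V, B) is (hray 1 0 l1, hray 1 0 0, hray k c l2),
   where k is the cosine of its angle at the image of V. *)
Lemma CAT_m1_vertex_le V A B gA gB s t :
  is_geodesic (@mdist R X) V A gA -> is_geodesic (@mdist R X) V B gB ->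
  0 < mdist V A -> 0 < mdist V B ->
  0 <= s <= mdist V A -> 0 <= t <= mdist V B ->
  mdist (gA s) (gB t) <=
    hvertex_dist (hcos_angle (mdist V A) (mdist V B) (mdist A B)) s t.
Proof.
move=> hA hB l1_gt0 l2_gt0 /andP[s0 s1] /andP[t0 t1].
have l3_ge := mdist_ge_normB V A B; have l3_le := mdist_le_addV V A B.
have kle1 := hcos_angle_le1 l1_gt0 l2_gt0 l3_ge.
have kgeN1 := hcos_angle_geN1 l1_gt0 l2_gt0 l3_ge l3_le.
have kE := hcos_angleE (mdist A B) l1_gt0 l2_gt0.
set l1 := mdist V A in l1_gt0 hA s1 kle1 kgeN1 kE *.
set l2 := mdist V B in l2_gt0 hB t1 kle1 kgeN1 kE *.
set l3 := mdist A B in kle1 kgeN1 kE *.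
set k := hcos_angle l1 l2 l3 in kle1 kgeN1 kE *.
set c := Num.sqrt (1 - k ^+ 2).
have kc : k ^+ 2 + c ^+ 2 = 1.
  by rewrite sqr_sqrtr ?subr_ge0; [ring | rewrite expr2; nra].
have e10 : 1 ^+ 2 + 0 ^+ 2 = 1 :> R by rewrite expr1n expr0n addr0.
have SP : minkowski_dot (hray k c l2) (hray 1 0 l1) = coshR l3.
  by rewrite minkowski_dot_hray mulr1 mulr0 addr0; lra.
have PQ : hdist (hray 1 0 l1) (hray 1 0 0) = mdist A V.
  by rewrite hdist_hray // subr0 ger0_norm ?ltW // metric_sym.
have QS : hdist (hray 1 0 0) (hray k c l2) = mdist V B.
  by rewrite -(hray0 k c) hdist_hray // sub0r normrN ger0_norm // ltW.
have SPd : hdist (hray k c l2) (hray 1 0 l1) = mdist B A.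
  by rewrite hdistE SP acoshR_coshR ger0_norm ?mdist_ge0 // metric_sym.
have gQS : H2_geodesic (hray 1 0 0) (hray k c l2) (hray k c).
  by rewrite -(hray0 k c); apply: hray_geodesic => //; apply: ltW.
have [gBA hBA] := geodX B A.
have cmp := catX (is_geodesic_rev hA) hB hBA (in_H2_hray l1 e10) (in_H2_hray 0 e10)
  (in_H2_hray l2 kc) PQ QS SPd (hray_geodesic_rev e10 (ltW l1_gt0)) gQS
  (hsegment_geodesic (in_H2_hray l2 kc) (in_H2_hray l1 e10) (mdist_ge0 _ _) SP).
have /= := cmp ord0 (@Ordinal 3 1 isT) (l1 - s) t.
rewrite [mdist A V]metric_sym -/l1 -/l2 (_ : l1 - (l1 - s) = s); last by ring.
rewrite hdist_hray_vertex; apply; apply/andP; split; lra.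
Qed.

Lemma CAT_m1_fellow_travel V A B gA gB eps s :
  is_geodesic (@mdist R X) V A gA -> is_geodesic (@mdist R X) V B gB ->
  mdist A B <= eps -> 0 < s -> s <= mdist V A -> s <= mdist V B ->
  mdist (gA s) (gB s) <= fellow_bound eps (mdist V A - s).
Proof.
move=> hA hB ABeps s0 sA sB.
have l1_gt0 := lt_le_trans s0 sA; have l2_gt0 := lt_le_trans s0 sB.
have sA' : 0 <= s <= mdist V A by rewrite (ltW s0).
have sB' : 0 <= s <= mdist V B by rewrite (ltW s0).
apply: le_trans (CAT_m1_vertex_le hA hB l1_gt0 l2_gt0 sA' sB') _.
exact: (hvertex_dist_le_fellow_bound l1_gt0 l2_gt0 (mdist_ge_normB V A B) ABeps sA' sB).
Qed.

End CATm1.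

Section C0Bounds.
Variable R : realType.
Implicit Types (eps L : R).

Lemma expR_half_c0 eps : 0 < eps ->
  expR (c0 eps / 2) = 2 * (1 + expR (eps / 2)) * sinhR eps / eps.
Proof.
move=> e0; rewrite /c0 mulrC mulKf ?pnatr_eq0 // lnK // posrE.
apply: divr_gt0 => //; apply: mulr_gt0; last exact: sinhR_gt0.
by apply: mulr_gt0 => //; apply: addr_gt0 => //; apply: expR_gt0.
Qed.

Lemma lt_c0 eps : 0 < eps -> 2 * eps < c0 eps.
Proof.
move=> e0; suff : expR eps < expR (c0 eps / 2) by rewrite ltr_expR; lra.
rewrite expR_half_c0 // ltr_pdivlMr // -(ltr_pM2r (expR_gt0 eps)).
set u := expR (eps / 2); set w := expR eps.
have -> : 2 * (1 + u) * sinhR eps * w = (1 + u) * (w ^+ 2 - 1).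
  by rewrite /sinhR expRN -/w; field; rewrite gt_eqF ?expR_gt0.
have hu : (1 + eps / 4) ^+ 2 <= u.
  rewrite /u (_ : eps / 2 = eps / 4 + eps / 4) ?expRD -?expr2; last by field.
  by rewrite ler_sqr ?nnegrE ?expR_ge1Dx //; lra.
have hw : 1 + 2 * eps <= w ^+ 2.
  by rewrite expr2 -expRD; apply: le_trans (expR_ge1Dx _); lra.
have := sqr_ge0 (eps - 4); rewrite !expr2 in hu * => sq4.
have pos : 0 < 1 + u - eps by nra.
have slack : 0 < eps * (1 + 2 * u - 2 * eps) by apply: mulr_gt0 => //; nra.
have hw0 : 0 <= w ^+ 2 - (1 + 2 * eps) by rewrite subr_ge0.
(* (1 + u) (w^2 - 1) - eps w^2 = (1 + u - eps) (w^2 - 1 - 2 eps) + eps (1 + 2 u - 2 eps) *)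
have := mulr_ge0 (ltW pos) hw0.
rewrite -mulrA mulrC -expr2; nra.
Qed.

Lemma fellow_bound_c0 eps L : 0 < eps -> c0 eps <= L ->
  fellow_bound eps (L / 2) <= eps / 4.
Proof.
move=> e0 hL; rewrite /fellow_bound.
set u := expR (eps / 2); set q := expR (- (L / 2)) * sinhR eps.
have hu : 1 + eps / 2 <= u by apply: expR_ge1Dx.
have q0 : 0 <= q by rewrite mulr_ge0 ?expR_ge0 ?sinhR_ge0 ?ltW.
have hq : q * (2 * (1 + u)) <= eps.
  rewrite -(ler_pM2r (expR_gt0 (L / 2))).
  have -> : q * (2 * (1 + u)) * expR (L / 2) = 2 * (1 + u) * sinhR eps.
    by rewrite /q expRN; field; rewrite gt_eqF ?expR_gt0.
  rewrite -ler_pdivrMl // mulrC -expR_half_c0 // ler_expR; lra.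
(* q <= eps / 4 <= (u - 1) / 2, hence q + q^2 <= q (1 + u) / 2 <= eps / 4. *)
nra.
Qed.

End C0Bounds.

Theorem lemma2p2 (R : realType) (X : metricType R)
  (HX_proper : proper_space X) (HX_geod : geodesic_space X) (HX_cat : CAT_m1 X)
  (eps : R) (Heps : 0 < eps) (a b a' b' : X)
  (Haa' : mdist a a' <= eps) (Hbb' : mdist b b' <= eps)
  (Hab : c0 eps <= mdist a b)
  (g : R -> X) (Hg : is_geodesic (@mdist R X) a b g)
  (g' : R -> X) (Hg' : is_geodesic (@mdist R X) a' b' g') :
  dist_to_seg (g (mdist a b / 2)) g' (mdist a' b') <= eps / 2.
Proof.
have bound := fellow_bound_c0 Heps Hab; have long := lt_c0 Heps.
have [h hh] := HX_geod b a'.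
have ba := metric_sym b a; have a'b := metric_sym a' b.
have L1_ge := metric_triangle a a' b; have L1_le := metric_triangle b a a'.
have L2_ge := metric_triangle a' b' b; have bb' := metric_sym b b'.
set L := mdist a b in Hab Hg bound ba L1_ge L1_le *.
set L1 := mdist b a' in hh a'b L1_ge L1_le *.
rewrite a'b in L1_ge; rewrite ba in L1_le.
have close1 : mdist (g (L / 2)) (h (L / 2)) <= eps / 4.
  apply: (le_trans _ bound).
  have := CAT_m1_fellow_travel HX_geod HX_cat (is_geodesic_rev Hg) hh Haa'
    (s := L / 2).
  rewrite ba -/L1 (_ : L - L / 2 = L / 2); last by field.
  by apply; lra.
have close2 : mdist (h (L / 2)) (g' (L1 - L / 2)) <= eps / 4.
  apply: (le_trans _ bound).
  have := CAT_m1_fellow_travel HX_geod HX_cat (is_geodesic_rev hh) Hg' Hbb'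
    (s := L1 - L / 2).
  rewrite a'b -/L1 (_ : L1 - (L1 - L / 2) = L / 2); last by ring.
  by apply; lra.
apply: le_trans (dist_to_seg_le _ _ (t := L1 - L / 2) _) _; first by apply/andP; lra.
by apply: le_trans (metric_triangle _ (h (L / 2)) _) _; lra.
Qed.
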